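(* If $(a_{ij})\in\mathbb P^9$ satisfies the five Plücker relations and the superintegrability conditions (SIC), then the polynomial $D(z,w)$ decomposes over $\mathbb C$ into a product of polynomials of degree at most one in $z,w$.
   Context: Homogeneous coordinates $a_{ij}$ ($i,j\ge0$, $i+j\le3$) on $\mathbb P^9$. Define $D(z,w)=\sum_{0\le i,j\le2,(i,j)\ne(2,2)}a_{ij}z^iw^j$ (a cubic with no $z^3,w^3,z^2w^2$ terms), $A_z(w)=a_{21}w^2+2a_{20}w+a_{30}$, $B_w(z)=a_{12}z^2+2a_{02}z+a_{03}$ (names of polynomials; subscripts on $D$ are partial derivatives). Plücker relations: $a_{03}a_{21}-a_{02}a_{11}+a_{01}a_{12}=0$, $a_{03}a_{20}-a_{02}a_{10}+a_{00}a_{12}=0$, $a_{03}a_{30}-a_{01}a_{10}+a_{00}a_{11}=0$, $a_{02}a_{30}-a_{01}a_{20}+a_{00}a_{21}=0$, $a_{12}a_{30}-a_{11}a_{20}+a_{10}a_{21}=0$. (SIC): the polynomial identities $3A_zDD_{ww}-2A_zB_wD_z-2A_zD_w^2+DD_wD_{zz}=0$, $3B_wDD_{zz}-2A_zB_wD_w-2B_wD_z^2+DD_zD_{ww}=0$, $2D^2D_{zz}D_{ww}-B_wDD_zD_{zz}-A_zDD_wD_{ww}-A_zB_wD_zD_w+A_z^2B_w^2=0$ in $\mathbb C[z,w]$. *)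

From HB Require Import structures.
From mathcomp Require Import all_boot all_order all_algebra.
From mathcomp Require Import complex.
From mathcomp Require Import mpoly.
Set Implicit Arguments. Unset Strict Implicit. Unset Printing Implicit Defensive.
Import Order.TTheory GRing.Theory Num.Theory.
Local Open Scope ring_scope.

(* Coordinates a_{ij} (i+j <= 3) are given as a function a : nat -> nat -> F;
   only the values with i + j <= 3 are ever used. *)
Section SIC.
Variable F : fieldType.
Implicit Types a : nat -> nat -> F.

Definition zv : {mpoly F[2]} := 'X_(ord0 : 'I_2).
Definition wv : {mpoly F[2]} := 'X_(ord_max : 'I_2).

Definition mono a (i j : nat) : {mpoly F[2]} := a i j *: (zv ^+ i * wv ^+ j).

Definition Dpoly a : {mpoly F[2]} :=
  mono a 0 0 + mono a 1 0 + mono a 0 1 + mono a 2 0 + mono a 1 1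
  + mono a 0 2 + mono a 2 1 + mono a 1 2.

Definition Azpoly a : {mpoly F[2]} :=
  a 2 1 *: wv ^+ 2 + (2 * a 2 0) *: wv + (a 3 0)%:MP.
Definition Bwpoly a : {mpoly F[2]} :=
  a 1 2 *: zv ^+ 2 + (2 * a 0 2) *: zv + (a 0 3)%:MP.

Definition dz (p : {mpoly F[2]}) := mderiv (ord0 : 'I_2) p.
Definition dw (p : {mpoly F[2]}) := mderiv (ord_max : 'I_2) p.

Definition proj_point a := exists i j, (i + j <= 3)%N /\ a i j != 0.

Definition plucker a :=
  [/\ a 0 3 * a 2 1 - a 0 2 * a 1 1 + a 0 1 * a 1 2 = 0,
      a 0 3 * a 2 0 - a 0 2 * a 1 0 + a 0 0 * a 1 2 = 0,
      a 0 3 * a 3 0 - a 0 1 * a 1 0 + a 0 0 * a 1 1 = 0,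
      a 0 2 * a 3 0 - a 0 1 * a 2 0 + a 0 0 * a 2 1 = 0 &
      a 1 2 * a 3 0 - a 1 1 * a 2 0 + a 1 0 * a 2 1 = 0].

Definition SIC a :=
  let D := Dpoly a in let A := Azpoly a in let B := Bwpoly a in
  let Dz := dz D in let Dw := dw D in
  let Dzz := dz Dz in let Dww := dw Dw in
  [/\ 3%:R * A * D * Dww - 2%:R * A * B * Dz - 2%:R * A * Dw ^+ 2
        + D * Dw * Dzz = 0,
      3%:R * B * D * Dzz - 2%:R * A * B * Dw - 2%:R * B * Dz ^+ 2
        + D * Dz * Dww = 0 &
      2%:R * D ^+ 2 * Dzz * Dww - B * D * Dz * Dzz - A * D * Dw * Dww
        - A * B * Dz * Dw + A ^+ 2 * B ^+ 2 = 0].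

(* p has (total) degree at most one: msize p = 1 + total degree (0 for p = 0) *)
Definition deg_le1 (p : {mpoly F[2]}) := (msize p <= 2)%N.

Definition prod_of_linear (p : {mpoly F[2]}) :=
  exists s : seq {mpoly F[2]}, all deg_le1 s /\ p = \prod_(q <- s) q.

End SIC.

(* Evaluating the superintegrability identities at points (z, w) turns them into
   vanishing polynomial functions; finite differences along lines extract single
   coefficients, which together with the Pluecker relations express all a_ij through
   a few parameters.  Splitting into cases according to which of a21, a12, a11, a20,
   a02 vanish, D is then written down explicitly as a product of linear forms; the
   remaining quadratic factors split because square roots exist in C. *)

From HB Require Import structures.
From mathcomp Require Import all_boot all_order all_algebra.
From mathcomp Require Import complex.
From mathcomp Require Import mpoly ring.
Import Order.TTheory GRing.Theory Num.Theory.
Local Open Scope ring_scope.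
Local Open Scope complex_scope.
Set Implicit Arguments. Unset Strict Implicit. Unset Printing Implicit Defensive.

Lemma mderivXU (R : nzRingType) (n : nat) (i j : 'I_n) :
  mderiv i ('X_j : {mpoly R[n]}) = (j == i)%:R.
Proof.
rewrite mderivX mnm1E; case: eqP => [->|_]; last by rewrite scale0r.
suff -> : (U_(i) - U_(i) = 0)%MM by rewrite mpolyX0 scale1r.
by apply/mnmP=> k; rewrite !mnmE subnn.
Qed.

Section SICForms.
Variable R : comPzRingType.
Implicit Types A B D Dz Dw Dzz Dww : R.

Definition sic1 A B D Dz Dw Dzz Dww :=
  3%:R * A * D * Dww - 2%:R * A * B * Dz - 2%:R * A * Dw ^+ 2 + D * Dw * Dzz.
Definition sic2 A B D Dz Dw Dzz Dww :=
  3%:R * B * D * Dzz - 2%:R * A * B * Dw - 2%:R * B * Dz ^+ 2 + D * Dz * Dww.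

End SICForms.

Lemma rmorph_sic1 (R S : comPzRingType) (f : {rmorphism R -> S}) (A B D Dz Dw Dzz Dww : R) :
  f (sic1 A B D Dz Dw Dzz Dww) = sic1 (f A) (f B) (f D) (f Dz) (f Dw) (f Dzz) (f Dww).
Proof. by rewrite /sic1 rmorphD !rmorphB !rmorphM !rmorph_nat. Qed.
Lemma rmorph_sic2 (R S : comPzRingType) (f : {rmorphism R -> S}) (A B D Dz Dw Dzz Dww : R) :
  f (sic2 A B D Dz Dw Dzz Dww) = sic2 (f A) (f B) (f D) (f Dz) (f Dw) (f Dzz) (f Dww).
Proof. by rewrite /sic2 rmorphD !rmorphB !rmorphM !rmorph_nat. Qed.

Section Evaluation.
Variable F : fieldType.
Implicit Types (a : nat -> nat -> F) (z w : F).

Definition D_at a z w := a 0 0 + a 1 0 * z + a 0 1 * w + a 2 0 * z ^+ 2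
  + a 1 1 * z * w + a 0 2 * w ^+ 2 + a 2 1 * z ^+ 2 * w + a 1 2 * z * w ^+ 2.
Definition Dz_at a z w :=
  a 1 0 + 2%:R * a 2 0 * z + a 1 1 * w + 2%:R * a 2 1 * z * w + a 1 2 * w ^+ 2.
Definition Dw_at a z w :=
  a 0 1 + a 1 1 * z + 2%:R * a 0 2 * w + a 2 1 * z ^+ 2 + 2%:R * a 1 2 * z * w.
Definition Dzz_at a z w := 2%:R * a 2 0 + 2%:R * a 2 1 * w.
Definition Dww_at a z w := 2%:R * a 0 2 + 2%:R * a 1 2 * z.
Definition A_at a z w := a 2 1 * w ^+ 2 + 2%:R * a 2 0 * w + a 3 0.
Definition B_at a z w := a 1 2 * z ^+ 2 + 2%:R * a 0 2 * z + a 0 3.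

Definition S1_at a z w := sic1 (A_at a z w) (B_at a z w) (D_at a z w)
  (Dz_at a z w) (Dw_at a z w) (Dzz_at a z w) (Dww_at a z w).
Definition S2_at a z w := sic2 (A_at a z w) (B_at a z w) (D_at a z w)
  (Dz_at a z w) (Dw_at a z w) (Dzz_at a z w) (Dww_at a z w).

Ltac meval_expand :=
  rewrite /Dpoly /Azpoly /Bwpoly /dz /dw /mono /zv /wv
    /D_at /Dz_at /Dw_at /Dzz_at /Dww_at /A_at /B_at;
  rewrite ?(mderivD, mderivZ, mderivM, mderivXU, mderivC) /=;
  rewrite !(mevalD, mevalZ, mevalM, mevalXU, meval1, mevalC, rmorph_nat); ring.

Section AtPoint.
Variables (a : nat -> nat -> F) (v : 'I_2 -> F).

Lemma meval_Dpoly : (Dpoly a).@[v] = D_at a (v ord0) (v ord_max).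
Proof. meval_expand. Qed.
Lemma meval_dz_Dpoly : (dz (Dpoly a)).@[v] = Dz_at a (v ord0) (v ord_max).
Proof. meval_expand. Qed.
Lemma meval_dw_Dpoly : (dw (Dpoly a)).@[v] = Dw_at a (v ord0) (v ord_max).
Proof. meval_expand. Qed.
Lemma meval_dzz_Dpoly : (dz (dz (Dpoly a))).@[v] = Dzz_at a (v ord0) (v ord_max).
Proof. meval_expand. Qed.
Lemma meval_dww_Dpoly : (dw (dw (Dpoly a))).@[v] = Dww_at a (v ord0) (v ord_max).
Proof. meval_expand. Qed.
Lemma meval_Azpoly : (Azpoly a).@[v] = A_at a (v ord0) (v ord_max).
Proof. meval_expand. Qed.
Lemma meval_Bwpoly : (Bwpoly a).@[v] = B_at a (v ord0) (v ord_max).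
Proof. meval_expand. Qed.

End AtPoint.

Lemma SIC_at a : SIC a -> forall z w, S1_at a z w = 0 /\ S2_at a z w = 0.
Proof.
case=> h1 h2 _ z w; pose v (i : 'I_2) := if i == ord0 then z else w.
pose D := Dpoly a; pose Dz := dz D; pose Dw := dw D.
have {}h1 : sic1 (Azpoly a) (Bwpoly a) D Dz Dw (dz Dz) (dw Dw) = 0 by [].
have {}h2 : sic2 (Azpoly a) (Bwpoly a) D Dz Dw (dz Dz) (dw Dw) = 0 by [].
split; [move: (congr1 (meval v) h1); rewrite rmorph_sic1
       | move: (congr1 (meval v) h2); rewrite rmorph_sic2];
  by rewrite /= /Dz /Dw /D meval0 meval_Dpoly meval_dz_Dpoly meval_dw_Dpoly meval_dzz_Dpoly
    meval_dww_Dpoly meval_Azpoly meval_Bwpoly.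
Qed.

End Evaluation.

Section LinearFactors.
Variable F : fieldType.
Implicit Types a : nat -> nat -> F.

Definition linpoly (c0 c1 c2 : F) : {mpoly F[2]} := c0%:MP + c1 *: zv F + c2 *: wv F.

Lemma deg_le1_linpoly c0 c1 c2 : deg_le1 (linpoly c0 c1 c2).
Proof.
have msizeZX c (i : 'I_2) : (msize (c *: 'X_i : {mpoly F[2]}) <= 2)%N.
  by apply: leq_trans (msizeZ_le _ _) _; rewrite msizeX mdeg1.
rewrite /deg_le1 /linpoly; apply: leq_trans (msizeD_le _ _) _.
rewrite geq_max msizeZX andbT; apply: leq_trans (msizeD_le _ _) _.
by rewrite geq_max msizeZX msizeC; case: (c0 != 0).
Qed.

Lemma prod_of_linear_linpoly c0 c1 c2 : prod_of_linear (linpoly c0 c1 c2).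
Proof. by exists [:: linpoly c0 c1 c2]; rewrite /= deg_le1_linpoly big_seq1. Qed.

Lemma prod_of_linearM (p q : {mpoly F[2]}) :
  prod_of_linear p -> prod_of_linear q -> prod_of_linear (p * q).
Proof.
move=> [s [ls ->]] [t [lt ->]]; exists (s ++ t).
by rewrite all_cat ls lt big_cat.
Qed.

Ltac split_Dpoly :=
  intros; rewrite /Dpoly /mono;
  repeat match goal with h : _ = _ |- _ => rewrite h; clear h end;
  rewrite /linpoly /zv /wv -!mul_mpolyC; ring.

Lemma Dpoly_eq_lines3 a k p q t :
  a 2 1 = k -> a 1 2 = k * t -> a 2 0 = k * p -> a 0 2 = k * t * q ->
  a 1 1 = 2%:R * k * (p * t + q) -> a 1 0 = k * (p ^+ 2 * t + 2%:R * p * q) ->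
  a 0 1 = k * (2%:R * p * t * q + q ^+ 2) -> a 0 0 = k * (p ^+ 2 * t * q + p * q ^+ 2) ->
  Dpoly a = linpoly (k * q) k 0 * linpoly p 0 1 * linpoly (p * t + q) 1 t.
Proof. split_Dpoly. Qed.

Lemma Dpoly_eq_wline_zroots a k p r1 r2 :
  a 2 1 = k -> a 1 2 = 0 -> a 2 0 = k * p -> a 0 2 = 0 ->
  a 1 1 = - (k * (r1 + r2)) -> a 1 0 = - (k * (r1 + r2)) * p ->
  a 0 1 = k * (r1 * r2) -> a 0 0 = k * (r1 * r2) * p ->
  Dpoly a = linpoly (k * p) 0 k * linpoly (- r1) 1 0 * linpoly (- r2) 1 0.
Proof. split_Dpoly. Qed.

Lemma Dpoly_eq_zline_wroots a k q r1 r2 :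
  a 2 1 = 0 -> a 1 2 = k -> a 2 0 = 0 -> a 0 2 = k * q ->
  a 1 1 = - (k * (r1 + r2)) -> a 0 1 = - (k * (r1 + r2)) * q ->
  a 1 0 = k * (r1 * r2) -> a 0 0 = k * (r1 * r2) * q ->
  Dpoly a = linpoly (k * q) k 0 * linpoly (- r1) 0 1 * linpoly (- r2) 0 1.
Proof. split_Dpoly. Qed.

Lemma Dpoly_eq_bilinear a k p q :
  a 2 1 = 0 -> a 1 2 = 0 -> a 2 0 = 0 -> a 0 2 = 0 ->
  a 1 1 = k -> a 0 1 = k * p -> a 1 0 = k * q -> a 0 0 = k * p * q ->
  Dpoly a = linpoly (k * p) k 0 * linpoly q 0 1.
Proof. split_Dpoly. Qed.

Lemma Dpoly_eq_diff_squares a k s p q :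
  a 2 1 = 0 -> a 1 2 = 0 -> a 1 1 = 0 -> a 2 0 = k -> a 0 2 = - (k * s ^+ 2) ->
  a 1 0 = 2%:R * k * p -> a 0 1 = - (2%:R * k * s ^+ 2 * q) ->
  a 0 0 = k * p ^+ 2 - k * s ^+ 2 * q ^+ 2 ->
  Dpoly a = linpoly (k * (p - s * q)) k (- (k * s)) * linpoly (p + s * q) 1 s.
Proof. split_Dpoly. Qed.

Lemma Dpoly_eq_zroots a k r1 r2 :
  a 2 1 = 0 -> a 1 2 = 0 -> a 1 1 = 0 -> a 0 2 = 0 -> a 0 1 = 0 ->
  a 2 0 = k -> a 1 0 = - (k * (r1 + r2)) -> a 0 0 = k * (r1 * r2) ->
  Dpoly a = linpoly (- (k * r1)) k 0 * linpoly (- r2) 1 0.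
Proof. split_Dpoly. Qed.

Lemma Dpoly_eq_wroots a k r1 r2 :
  a 2 1 = 0 -> a 1 2 = 0 -> a 1 1 = 0 -> a 2 0 = 0 -> a 1 0 = 0 ->
  a 0 2 = k -> a 0 1 = - (k * (r1 + r2)) -> a 0 0 = k * (r1 * r2) ->
  Dpoly a = linpoly (- (k * r1)) 0 k * linpoly (- r2) 0 1.
Proof. split_Dpoly. Qed.

Lemma Dpoly_eq_linpoly a :
  a 2 1 = 0 -> a 1 2 = 0 -> a 1 1 = 0 -> a 2 0 = 0 -> a 0 2 = 0 ->
  Dpoly a = linpoly (a 0 0) (a 1 0) (a 0 1).
Proof. split_Dpoly. Qed.

End LinearFactors.

Lemma eq_of_mul_subr_eq0 (R : idomainType) (c x y r : R) : c != 0 -> r = c * (x - y) -> r = 0 -> x = y.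
Proof. by move=> c_neq0 -> /eqP; rewrite mulf_eq0 (negbTE c_neq0) subr_eq0 => /eqP. Qed.

Lemma eq0_of_mul_sqr_eq0 (R : idomainType) (c x r : R) : c != 0 -> r = c * x ^+ 2 -> r = 0 -> x = 0.
Proof.
by move=> c_neq0 -> /eqP; rewrite mulf_eq0 (negbTE c_neq0) expf_eq0 => /andP [_ /eqP].
Qed.

Section Classification.
Variable F : numClosedFieldType.

Lemma quadratic_vieta (c2 c1 c0 : F) : c2 != 0 ->
  exists r1 r2, c1 = - (c2 * (r1 + r2)) /\ c0 = c2 * (r1 * r2).
Proof.
move=> c2_neq0; set s := sqrtC (c1 ^+ 2 - 4%:R * c2 * c0).
have s2 : s ^+ 2 = c1 ^+ 2 - 4%:R * c2 * c0 by rewrite sqrtCK.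
exists ((- c1 + s) / (2%:R * c2)), ((- c1 - s) / (2%:R * c2)); split; first by field.
have -> : c2 * ((- c1 + s) / (2%:R * c2) * ((- c1 - s) / (2%:R * c2)))
          = (c1 ^+ 2 - s ^+ 2) / (4%:R * c2) by field.
by rewrite s2; field.
Qed.

Ltac nonzero := rewrite ?oppr_eq0 ?mulf_eq0 ?expf_eq0 ?pnatr_eq0 ?invr_eq0 /=;
  repeat match goal with H : is_true (_ != 0) |- _ => rewrite (negbTE H) /= end; done.
Ltac field_nz := field;
  repeat match goal with H : is_true (_ != 0) |- _ => rewrite H /= end; try done.
Ltac solve_for c E := apply: (eq_of_mul_subr_eq0 (c := c) _ _ E); [nonzero | field_nz].
Ltac linear_factors := repeat apply: prod_of_linearM; exact: prod_of_linear_linpoly.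

Variable a : nat -> nat -> F.
Hypotheses (hP : plucker a) (hS : SIC a).

Lemma S1_vanishes z w : S1_at a z w = 0. Proof. by have [] := SIC_at hS z w. Qed.
Lemma S2_vanishes z w : S2_at a z w = 0. Proof. by have [] := SIC_at hS z w. Qed.

(* A coefficient of a polynomial of degree at most 5 in one variable is a fixed
   combination of its values at 0, 1, ..., 5 (a finite difference). *)
Ltac finite_difference n combination :=
  apply: (mulfI (x := n%:R : F)); [by rewrite pnatr_eq0 | rewrite mulr0];
  transitivity combination;
  [ rewrite /S1_at /S2_at /sic1 /sic2 /D_at /Dz_at /Dw_at /Dzz_at /Dww_at /A_at /B_at; ring
  | by rewrite !(S1_vanishes, S2_vanishes); ring ].

Lemma S1_z4 : a 2 1 * (a 2 0 ^+ 2 - a 2 1 * a 3 0) = 0.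
Proof.
finite_difference 48%N (S1_at a 0 0 - 4%:R * S1_at a 1 0 + 6%:R * S1_at a 2 0
  - 4%:R * S1_at a 3 0 + S1_at a 4 0).
Qed.

Lemma S1_z3 : a 1 0 * a 2 0 * a 2 1 + a 2 0 ^+ 2 * a 1 1 + a 2 0 * a 1 2 * a 3 0
  - 2%:R * a 1 1 * a 2 1 * a 3 0 = 0.
Proof.
finite_difference 24%N (- 5%:R * S1_at a 0 0 + 18%:R * S1_at a 1 0 - 24%:R * S1_at a 2 0
  + 14%:R * S1_at a 3 0 - 3%:R * S1_at a 4 0).
Qed.

Lemma S1_diag5 : a 1 1 * a 2 1 * a 1 2 - 2%:R * a 2 0 * a 1 2 ^+ 2
  - 2%:R * a 0 2 * a 2 1 ^+ 2 = 0.
Proof.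
finite_difference 240%N (- S1_at a 0 0 + 5%:R * S1_at a 1 1 - 10%:R * S1_at a 2 2
  + 10%:R * S1_at a 3 3 - 5%:R * S1_at a 4 4 + S1_at a 5 5).
Qed.

Lemma S2_w4 : a 1 2 * (a 0 2 ^+ 2 - a 1 2 * a 0 3) = 0.
Proof.
finite_difference 48%N (S2_at a 0 0 - 4%:R * S2_at a 0 1 + 6%:R * S2_at a 0 2
  - 4%:R * S2_at a 0 3 + S2_at a 0 4).
Qed.

Lemma S2_w3 : a 0 1 * a 0 2 * a 1 2 + a 1 1 * a 0 2 ^+ 2 - 2%:R * a 1 1 * a 1 2 * a 0 3
  + a 0 2 * a 2 1 * a 0 3 = 0.
Proof.
finite_difference 24%N (- 5%:R * S2_at a 0 0 + 18%:R * S2_at a 0 1 - 24%:R * S2_at a 0 2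
  + 14%:R * S2_at a 0 3 - 3%:R * S2_at a 0 4).
Qed.

Lemma S2_w2 : a 0 0 * a 0 2 * a 1 2 + a 1 0 * a 0 2 ^+ 2 - 2%:R * a 1 0 * a 1 2 * a 0 3
  + a 0 1 * a 1 1 * a 0 2 + 2%:R * a 0 1 * a 2 1 * a 0 3 - a 2 0 * a 0 2 * a 0 3
  - a 1 1 ^+ 2 * a 0 3 = 0.
Proof.
finite_difference 48%N (35%:R * S2_at a 0 0 - 104%:R * S2_at a 0 1 + 114%:R * S2_at a 0 2
  - 56%:R * S2_at a 0 3 + 11%:R * S2_at a 0 4).
Qed.

Lemma S2_z1 : a 0 0 * a 1 0 * a 1 2 + 8%:R * a 0 0 * a 2 0 * a 0 2 - a 1 0 ^+ 2 * a 0 2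
  - a 1 0 * a 2 0 * a 0 3 - 2%:R * a 0 1 * a 0 2 * a 3 0 - a 1 1 * a 3 0 * a 0 3 = 0.
Proof.
finite_difference 24%N (- 25%:R * S2_at a 0 0 + 48%:R * S2_at a 1 0 - 36%:R * S2_at a 2 0
  + 16%:R * S2_at a 3 0 - 3%:R * S2_at a 4 0).
Qed.

Lemma Dpoly_split_cubic : a 2 1 != 0 -> a 1 2 != 0 -> prod_of_linear (Dpoly a).
Proof.
case: hP => P1 _ _ P4 P5 k_neq0 t_neq0.
have h30 : a 3 0 = a 2 0 ^+ 2 / a 2 1 by solve_for (- a 2 1 ^+ 2) S1_z4.
have h03 : a 0 3 = a 0 2 ^+ 2 / a 1 2 by solve_for (- a 1 2 ^+ 2) S2_w4.
have h11 : a 1 1 = 2%:R * a 2 1 * (a 2 0 / a 2 1 * (a 1 2 / a 2 1) + a 0 2 / a 1 2).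
  by solve_for (a 2 1 * a 1 2) S1_diag5.
rewrite h30 h11 in P5; rewrite h03 h11 in P1.
have h10 : a 1 0 = a 2 1 * ((a 2 0 / a 2 1) ^+ 2 * (a 1 2 / a 2 1)
                            + 2%:R * (a 2 0 / a 2 1) * (a 0 2 / a 1 2)).
  by solve_for (a 2 1) P5.
have h01 : a 0 1 = a 2 1 * (2%:R * (a 2 0 / a 2 1) * (a 1 2 / a 2 1) * (a 0 2 / a 1 2)
                            + (a 0 2 / a 1 2) ^+ 2).
  by solve_for (a 1 2) P1.
rewrite h30 h01 in P4.
have h00 : a 0 0 = a 2 1 * ((a 2 0 / a 2 1) ^+ 2 * (a 1 2 / a 2 1) * (a 0 2 / a 1 2)
                            + (a 2 0 / a 2 1) * (a 0 2 / a 1 2) ^+ 2).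
  by solve_for (a 2 1) P4.
rewrite (Dpoly_eq_lines3 (k := a 2 1) (p := a 2 0 / a 2 1) (q := a 0 2 / a 1 2)
  (t := a 1 2 / a 2 1)) //; first linear_factors.
all: by field_nz.
Qed.

Lemma Dpoly_split_zline : a 2 1 = 0 -> a 1 2 != 0 -> prod_of_linear (Dpoly a).
Proof.
case: hP => P1 P2 _ _ _ h21 t_neq0.
have E := S1_diag5; rewrite h21 in E P1.
have h20 : a 2 0 = 0 by solve_for (- (2%:R * a 1 2 ^+ 2)) E.
rewrite h20 in P2.
have h01 : a 0 1 = a 1 1 * (a 0 2 / a 1 2) by solve_for (a 1 2) P1.
have h00 : a 0 0 = a 1 0 * (a 0 2 / a 1 2) by solve_for (a 1 2) P2.
have [r1 [r2 [hr1 hr2]]] := quadratic_vieta (a 1 1) (a 1 0) t_neq0.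
rewrite (Dpoly_eq_zline_wroots (k := a 1 2) (q := a 0 2 / a 1 2) (r1 := r1) (r2 := r2)) //.
- linear_factors.
- by field_nz.
- by rewrite h01 hr1.
- by rewrite h00 hr2.
Qed.

Lemma Dpoly_split_wline : a 2 1 != 0 -> a 1 2 = 0 -> prod_of_linear (Dpoly a).
Proof.
case: hP => _ _ _ P4 P5 k_neq0 h12.
have E := S1_diag5; rewrite h12 in E P5.
have h02 : a 0 2 = 0 by solve_for (- (2%:R * a 2 1 ^+ 2)) E.
rewrite h02 in P4.
have h10 : a 1 0 = a 1 1 * (a 2 0 / a 2 1) by solve_for (a 2 1) P5.
have h00 : a 0 0 = a 0 1 * (a 2 0 / a 2 1) by solve_for (a 2 1) P4.
have [r1 [r2 [hr1 hr2]]] := quadratic_vieta (a 1 1) (a 0 1) k_neq0.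
rewrite (Dpoly_eq_wline_zroots (k := a 2 1) (p := a 2 0 / a 2 1) (r1 := r1) (r2 := r2)) //.
- linear_factors.
- by field_nz.
- by rewrite h10 hr1.
- by rewrite h00 hr2.
Qed.

Lemma Dpoly_split_conic_mixed :
  a 2 1 = 0 -> a 1 2 = 0 -> a 1 1 != 0 -> prod_of_linear (Dpoly a).
Proof.
case: hP => _ _ P3 _ _ h21 h12 m_neq0.
have E2 := S1_z3; have E5 := S2_w3; have E6 := S2_w2.
rewrite h21 h12 in E2 E5 E6.
have h20 : a 2 0 = 0 by apply: (eq0_of_mul_sqr_eq0 (c := a 1 1) _ _ E2); [nonzero | ring].
have h02 : a 0 2 = 0 by apply: (eq0_of_mul_sqr_eq0 (c := a 1 1) _ _ E5); [nonzero | ring].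
rewrite h20 h02 in E6.
have h03 : a 0 3 = 0 by solve_for (- a 1 1 ^+ 2) E6.
rewrite h03 in P3.
have h00 : a 0 0 = a 0 1 * a 1 0 / a 1 1 by solve_for (a 1 1) P3.
rewrite (Dpoly_eq_bilinear (k := a 1 1) (p := a 0 1 / a 1 1) (q := a 1 0 / a 1 1)) //.
- linear_factors.
- by field_nz.
- by field_nz.
- by rewrite h00; field_nz.
Qed.

Lemma Dpoly_split_conic_unmixed :
  a 2 1 = 0 -> a 1 2 = 0 -> a 1 1 = 0 -> prod_of_linear (Dpoly a).
Proof.
case: hP => _ P2 _ P4 _ h21 h12 h11.
rewrite h12 in P2; rewrite h21 in P4.
have [h20|p_neq0] := eqVneq (a 2 0) 0; have [h02|q_neq0] := eqVneq (a 0 2) 0.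
- by rewrite Dpoly_eq_linpoly //; linear_factors.
- rewrite h20 in P2.
  have h10 : a 1 0 = 0 by solve_for (- a 0 2) P2.
  have [r1 [r2 [hr1 hr2]]] := quadratic_vieta (a 0 1) (a 0 0) q_neq0.
  by rewrite (Dpoly_eq_wroots (r1 := r1) (r2 := r2) h21 h12 h11 h20 h10 erefl hr1 hr2);
    linear_factors.
- rewrite h02 in P4.
  have h01 : a 0 1 = 0 by solve_for (- a 2 0) P4.
  have [r1 [r2 [hr1 hr2]]] := quadratic_vieta (a 1 0) (a 0 0) p_neq0.
  by rewrite (Dpoly_eq_zroots (r1 := r1) (r2 := r2) h21 h12 h11 h02 h01 erefl hr1 hr2);
    linear_factors.
- have h03 : a 0 3 = a 0 2 * a 1 0 / a 2 0 by solve_for (a 2 0) P2.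
  have h30 : a 3 0 = a 0 1 * a 2 0 / a 0 2 by solve_for (a 0 2) P4.
  have E := S2_z1; rewrite h12 h11 h03 h30 in E.
  set s := sqrtC (- (a 0 2 / a 2 0)).
  have s2 : s ^+ 2 = - (a 0 2 / a 2 0) by rewrite sqrtCK.
  rewrite (Dpoly_eq_diff_squares (k := a 2 0) (s := s) (p := a 1 0 / (2%:R * a 2 0))
    (q := a 0 1 / (2%:R * a 0 2))) //; first linear_factors.
  + by rewrite s2; field_nz.
  + by field_nz.
  + by rewrite s2; field_nz.
  + by rewrite s2; solve_for (8%:R * a 2 0 * a 0 2) E.
Qed.

End Classification.

Unset Implicit Arguments.

Theorem lemma4p1 (R : rcfType) (a : nat -> nat -> R[i]) :
  proj_point a -> plucker a -> SIC a -> prod_of_linear (Dpoly a).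
Proof.
move=> _ hP hS.
have [h21|k_neq0] := eqVneq (a 2 1) 0; have [h12|t_neq0] := eqVneq (a 1 2) 0.
- have [h11|m_neq0] := eqVneq (a 1 1) 0.
  + exact: Dpoly_split_conic_unmixed.
  + exact: Dpoly_split_conic_mixed.
- exact: Dpoly_split_zline.
- exact: Dpoly_split_wline.
- exact: Dpoly_split_cubic.
Qed.
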